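(* Let $r\ge1$ and let $\mathcal V$ be a $(3,2r)$-modular variety. Then for every $\ell\ge1$, $\mathcal V$ satisfies $$A_\ell(\alpha,\beta,\gamma)\subseteq\alpha\beta\circ_{2r^\ell}\alpha\gamma$$ for all congruences $\alpha,\beta,\gamma$; that is, $D^*_{\mathcal V}(\ell)\le 2r^\ell$.
   Context: $\circ$ is relational composition, juxtaposition is intersection. For relations $X,Y$ and $m\ge1$, $X\circ_m Y$ denotes $X\circ Y\circ X\circ\cdots$ with $m$ factors. A variety is $(3,k)$-modular if each of its algebras satisfies $\alpha(\beta\circ\alpha\gamma\circ\beta)\subseteq\alpha\beta\circ_k\alpha\gamma$ for all congruences. The relation terms $A_\ell(\alpha,\beta,\gamma)$ are defined recursively: $A_1(\alpha,\beta,\gamma)=\alpha(\beta\circ\alpha\gamma\circ\beta)$ and $A_{\ell+1}(\alpha,\beta,\gamma)=\alpha\big(\beta\circ A_\ell(\alpha,\gamma,\beta)\circ\beta\big)$ (so e.g. $A_2=\alpha(\beta\circ\alpha(\gamma\circ\alpha\beta\circ\gamma)\circ\beta)$). $D^*_{\mathcal V}(\ell)$ is the least $k$ such that $\mathcal V$ satisfies $A_\ell(\alpha,\beta,\gamma)\subseteq\alpha\beta\circ_k\alpha\gamma$. *)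

From mathcomp Require Import all_boot.
Set Implicit Arguments. Unset Strict Implicit. Unset Printing Implicit Defensive.

Record signature := Signature { op_sym : Type ; arity : op_sym -> nat }.

Record algebra (S : signature) := Algebra {
  carrier :> Type ;
  interp : forall o : op_sym S, ('I_(arity o) -> carrier) -> carrier }.

Inductive term (S : signature) (X : Type) : Type :=
  | Var : X -> term S X
  | App : forall o : op_sym S, ('I_(arity o) -> term S X) -> term S X.

Fixpoint eval (S : signature) (X : Type) (A : algebra S) (v : X -> A)
  (t : term S X) : A :=
  match t with
  | Var x => v x
  | App o ts => @interp S A o (fun i => @eval S X A v (ts i))
  end.

(* A variety = the class of all models of some set of identities
   (equivalently, by Birkhoff, a class closed under H, S, P). Variables
   range over nat, which suffices since operations are finitary. *)
Definition is_variety (S : signature) (V : algebra S -> Prop) : Prop :=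
  exists E : term S nat * term S nat -> Prop,
    forall A : algebra S,
      V A <-> (forall e, E e -> forall v : nat -> A, @eval S nat A v e.1 = @eval S nat A v e.2).

Definition relation (T : Type) := T -> T -> Prop.

Definition rcomp (T : Type) (X Y : relation T) : relation T :=
  fun x z => exists y, X x y /\ Y y z.
Definition rmeet (T : Type) (X Y : relation T) : relation T :=
  fun x y => X x y /\ Y x y.
Definition rincl (T : Type) (X Y : relation T) : Prop :=
  forall x y, X x y -> Y x y.

(* X o_m Y = X o Y o X o ... with m factors (m >= 1);
   for m = 0 we (arbitrarily) take the identity relation. *)
Fixpoint rcompn (T : Type) (m : nat) (X Y : relation T) : relation T :=
  match m with
  | 0 => fun x y => x = y
  | 1 => X
  | m'.+1 => rcomp X (rcompn m' Y X)
  end.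

Definition is_congruence (S : signature) (A : algebra S) (R : relation A) : Prop :=
  [/\ (forall x, R x x),
      (forall x y, R x y -> R y x),
      (forall x y z, R x y -> R y z -> R x z) &
      (forall (o : op_sym S) (a b : 'I_(arity o) -> A),
          (forall i, R (a i) (b i)) -> R (@interp S A o a) (@interp S A o b))].

(* Arel 0 a b c = a b (intersection), and
   Arel (l+1) a b c = a (b o Arel l a c b o b).
   Hence Arel 1 a b c = a (b o a c o b) = A_1, and Arel l = A_l for l >= 1. *)
Fixpoint Arel (T : Type) (l : nat) (a b c : relation T) : relation T :=
  match l with
  | 0 => rmeet a b
  | l'.+1 => rmeet a (rcomp b (rcomp (Arel l' a c b) b))
  end.

Definition modular3 (S : signature) (V : algebra S -> Prop) (k : nat) : Prop :=
  forall A : algebra S, V A ->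
  forall a b c : relation A,
    is_congruence a -> is_congruence b -> is_congruence c ->
    rincl (rmeet a (rcomp b (rcomp (rmeet a c) b)))
          (rcompn k (rmeet a b) (rmeet a c)).

From mathcomp Require Import all_boot.
From Stdlib Require Import FunctionalExtensionality ProofIrrelevance IndefiniteDescription.
Set Implicit Arguments. Unset Strict Implicit.

(* Induction on l, with b and c exchanged at each level. Unfolding A_(l+1), we have a x y,
   b x u, b v y, and by induction u and v are joined by m = r^l alternating steps of
   a/\c and a/\b. Cutting this path in the middle (rotating one a/\b-step to the far end of
   the second half) writes it as u Q w G w' and z Q w', where Q, half of the path, is a
   compatible reflexive relation, G is equality or one a/\c-step, and z is still b-related
   to y and a-related to u. In the subalgebra Q of A x A, (3,2r)-modularity for a, b acting
   on the first coordinate and G on the second gives x (a/\b o a/\(Q o G o Q^-1))^r y, and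
   each such block unfolds again into m alternating steps: r * m = r^(l+1) in total. *)

Fixpoint rpow (T : Type) (n : nat) (P : relation T) : relation T :=
  match n with 0 => fun x y => x = y | n'.+1 => rcomp P (rpow n' P) end.

Definition rconj (T : Type) (Q G : relation T) : relation T :=
  fun p q => exists w w', [/\ Q p w, G w w' & Q q w'].

Section RelationPowers.
Variable T : Type.
Implicit Types P X Y : relation T.

Lemma rpow_add m n P x y : rpow (m + n) P x y <-> rcomp (rpow m P) (rpow n P) x y.
Proof.
elim: m x => [|m IH] x /=; first by split=> [|[z [-> //]]]; exists x.
split=> [[t [Pxt /IH [s [ts sy]]]] | [s [[t [Pxt ts]] sy]]]; first by exists s; split=> //; exists t.
by exists t; split=> //; apply/IH; exists s.
Qed.

Lemma rpow_sub n P P' : rincl P P' -> rincl (rpow n P) (rpow n P').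
Proof. by move=> sP; elim: n => [|n IH] x y //= [t [xt ty]]; exists t; split; auto. Qed.

Lemma rpow_refl n P : (forall x, P x x) -> forall x, rpow n P x x.
Proof. by move=> rP; elim: n => [|n IH] x //=; exists x. Qed.

Lemma rpow_mul m n P : rincl (rpow m (rpow n P)) (rpow (m * n) P).
Proof.
elim: m => [|m IH] x y //= [t [xt ty]].
by rewrite mulSn; apply/rpow_add; exists t; split; last exact: IH.
Qed.

Lemma rpowSr n P : rincl (rcomp (rpow n P) P) (rpow n.+1 P).
Proof. by move=> x y [t [xt ty]]; rewrite -addn1; apply/rpow_add; exists t; split=> //; exists y. Qed.

Lemma rpow_rcomp_shift n X Y :
  rincl (rcomp Y (rpow n (rcomp X Y))) (rcomp (rpow n (rcomp Y X)) Y).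
Proof.
elim: n => [|n IH] x y /= [t [xt ty]]; first by exists x; rewrite -ty.
case: ty => s' [[s [ts ss']] s'y].
have [q [s'q qy]] := IH _ _ (ex_intro _ s' (conj ss' s'y)).
by exists q; split=> //; exists s; split=> //; exists t.
Qed.

Lemma rpow_rcomp_pad n X Y : (forall x, Y x x) ->
  rincl (rcomp X (rpow n (rcomp Y X))) (rpow n.+1 (rcomp X Y)).
Proof.
move=> rY; elim: n => [|n IH] x y /= [t [xt ty]]; first by exists y; rewrite -ty; split=> //; exists t.
case: ty => s' [[s [ts ss']] s'y].
by exists s; split; [exists t | apply: IH; exists s'].
Qed.

Lemma rpow_rcomp_absorb n X Y : (forall x y z, Y x y -> Y y z -> Y x z) -> 0 < n ->
  rincl (rcomp Y (rpow n (rcomp Y X))) (rpow n (rcomp Y X)).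
Proof.
move=> tY; case: n => [//|n] _ x y /= [t [xt [s' [[s [ts ss']] s'y]]]].
by exists s'; split=> //; exists s; split=> //; apply: tY ts.
Qed.

Section Symmetric.
Variables X Y : relation T.
Hypotheses (sX : forall x y, X x y -> X y x) (sY : forall x y, Y x y -> Y y x).

Lemma rpow_rcomp_sym n x y : rpow n (rcomp X Y) x y -> rpow n (rcomp Y X) y x.
Proof.
elim: n x => [|n IH] x /=; first by move->.
case=> s [[t [xt ts]] sy]; apply: rpowSr; exists s; split; first exact: IH.
by exists t; split; auto.
Qed.

Lemma rconj_eq_rpow n : (forall x y z, Y x y -> Y y z -> Y x z) -> 0 < n ->
  rincl (rcomp Y (rconj (rpow n (rcomp X Y)) eq)) (rpow (n + n) (rcomp Y X)).
Proof.
move=> tY n_gt0 x y [p [xp [w [_ [pw <- yw]]]]].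
have [t [xt tw]] := rpow_rcomp_shift (ex_intro _ p (conj xp pw)).
have ty := rpow_rcomp_absorb tY n_gt0 (ex_intro _ w (conj tw (rpow_rcomp_sym yw))).
by apply/rpow_add; exists t.
Qed.

Lemma rconj_rpow n :
  rincl (rcomp Y (rconj (rpow n (rcomp X Y)) X)) (rpow (n + n.+1) (rcomp Y X)).
Proof.
move=> x y [p [xp [w [w' [pw ww' yw']]]]].
have [t [xt tw]] := rpow_rcomp_shift (ex_intro _ p (conj xp pw)).
apply/rpow_add; exists t; split=> //.
by exists w'; split; [exists w | exact: rpow_rcomp_sym].
Qed.

End Symmetric.
End RelationPowers.

Lemma rcompnSS T n (X Y : relation T) : 0 < n ->
  rcompn n.+2 X Y = rcomp X (rcomp Y (rcompn n X Y)).
Proof. by case: n. Qed.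

Lemma rcompn_double T k (X Y : relation T) x y :
  rcompn (2 * k) X Y x y <-> rpow k (rcomp X Y) x y.
Proof.
elim: k x y => [|k IH] x y //; case: k IH => [|k] IH.
  by split=> [xy | [z [xz <-]]]; [exists y | ].
rewrite (_ : 2 * k.+2 = (2 * k.+1).+2) ?rcompnSS ?muln_gt0 //; last by rewrite !mulnS.
split=> [[t [xt [s [ts /IH sy]]]] | [s [[t [xt ts]] /IH sy]]]; first by exists s; split=> //; exists t.
by exists t; split=> //; exists s.
Qed.

Lemma rcompn_map T T' (f : T -> T') m (X Y : relation T) (X' Y' : relation T') :
  (forall p q, X p q -> X' (f p) (f q)) -> (forall p q, Y p q -> Y' (f p) (f q)) ->
  forall x y, rcompn m X Y x y -> rcompn m X' Y' (f x) (f y).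
Proof.
elim: m X Y X' Y' => [|[|m] IH] X Y X' Y' fX fY x y /=; [by move-> | exact: fX |].
by case=> t [xt ty]; exists (f t); split; [exact: fX | exact: (IH Y X Y' X')].
Qed.

Section Algebras.
Variable S : signature.

Definition compatible (A : algebra S) (R : relation A) : Prop :=
  forall (o : op_sym S) (f g : 'I_(arity o) -> A),
    (forall i, R (f i) (g i)) -> R (@interp S A o f) (@interp S A o g).

Definition homomorphism (A B : algebra S) (f : A -> B) : Prop :=
  forall (o : op_sym S) (g : 'I_(arity o) -> A),
    f (@interp S A o g) = @interp S B o (fun i => f (g i)).

Lemma homomorphism_eval (A B : algebra S) (f : A -> B) (X : Type) (v : X -> A) t :
  homomorphism f -> f (eval v t) = eval (f \o v) t.
Proof.
move=> hf; elim: t => [//|o ts IH] /=.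
by rewrite hf; congr interp; apply: functional_extensionality.
Qed.

Lemma compatible_rmeet (A : algebra S) (X Y : relation A) :
  compatible X -> compatible Y -> compatible (rmeet X Y).
Proof. by move=> cX cY o f g fg; split; [apply: cX | apply: cY] => i; case: (fg i). Qed.

Lemma compatible_rcomp (A : algebra S) (X Y : relation A) :
  compatible X -> compatible Y -> compatible (rcomp X Y).
Proof.
move=> cX cY o f g fg; have [h fhg] := functional_choice _ fg.
by exists (@interp S A o h); split; [apply: cX | apply: cY] => i; case: (fhg i).
Qed.

Lemma compatible_rpow (A : algebra S) n (P : relation A) :
  compatible P -> compatible (rpow n P).
Proof.
move=> cP; elim: n => [|n IH] /=; last exact: compatible_rcomp.
by move=> o f g fg; congr interp; apply: functional_extensionality.
Qed.

Lemma eq_congruence (A : algebra S) : is_congruence (fun x y : A => x = y).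
Proof.
split=> [//|x y ->|x y z -> ->|] //.
by move=> o f g fg; congr interp; apply: functional_extensionality.
Qed.

Lemma rmeet_congruence (A : algebra S) (X Y : relation A) :
  is_congruence X -> is_congruence Y -> is_congruence (rmeet X Y).
Proof.
move=> [rX sX tX cX] [rY sY tY cY]; split; last exact: compatible_rmeet.
- by move=> x; split.
- by move=> x y [xyX xyY]; split; auto.
- by move=> x y z [xyX xyY] [yzX yzY]; split; [apply: tX yzX | apply: tY yzY].
Qed.

Lemma congruence_preimage (A B : algebra S) (f : A -> B) (R : relation B) :
  homomorphism f -> is_congruence R -> is_congruence (fun p q => R (f p) (f q)).
Proof.
move=> hf [rR sR tR cR]; split=> [x|x y|x y z|o g g' gg'] //; [exact: sR | exact: tR |].
by rewrite !hf; apply: cR.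
Qed.

Section RelationAlgebra.
Variables (A : algebra S) (Q : relation A).
Hypothesis cQ : compatible Q.

Definition rel_carrier := {p : A * A | Q p.1 p.2}.

Definition rel_interp (o : op_sym S) (f : 'I_(arity o) -> rel_carrier) : rel_carrier :=
  exist _ (@interp S A o (fun i => (sval (f i)).1), @interp S A o (fun i => (sval (f i)).2))
    (cQ (fun i => proj2_sig (f i))).

Definition rel_algebra : algebra S := @Algebra S rel_carrier rel_interp.

Definition rel_fst (p : rel_algebra) : A := (sval p).1.
Definition rel_snd (p : rel_algebra) : A := (sval p).2.

Lemma homomorphism_rel_fst : homomorphism rel_fst. Proof. by []. Qed.
Lemma homomorphism_rel_snd : homomorphism rel_snd. Proof. by []. Qed.

Lemma rel_pair_inj (p q : rel_algebra) :
  rel_fst p = rel_fst q -> rel_snd p = rel_snd q -> p = q.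
Proof.
case: p q => [[p1 p2] Qp] [[q1 q2] Qq]; rewrite /rel_fst /rel_snd /= => e1 e2.
by subst; congr exist; apply: proof_irrelevance.
Qed.

Lemma variety_rel_algebra (V : algebra S -> Prop) :
  is_variety V -> V A -> V rel_algebra.
Proof.
move=> [E HE] VA; apply/HE => e Ee v; have eqA := proj1 (HE A) VA e Ee.
by apply: rel_pair_inj;
  rewrite !(homomorphism_eval _ _ homomorphism_rel_fst, homomorphism_eval _ _ homomorphism_rel_snd) eqA.
Qed.

End RelationAlgebra.
End Algebras.

Lemma modular3_rconj (S : signature) (V : algebra S -> Prop) (k : nat) :
  is_variety V -> modular3 V k ->
  forall A : algebra S, V A ->
  forall a b G Q : relation A, is_congruence a -> is_congruence b -> is_congruence G ->
  compatible Q -> (forall x, Q x x) ->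
  rincl (rmeet a (rcomp b (rcomp (rmeet a (rconj Q G)) b)))
        (rcompn k (rmeet a b) (rmeet a (rconj Q G))).
Proof.
move=> HV Hmod A VA a b G Q ca cb cG cQ rQ x y
  [axy [u [bxu [z [[auz [w [w' [Quw Gww' Qzw']]]] bzy]]]]].
pose B := rel_algebra cQ.
pose in_fst (R : relation A) : relation B := fun p q => R (rel_fst p) (rel_fst q).
pose in_snd (R : relation A) : relation B := fun p q => R (rel_snd p) (rel_snd q).
have fst_cong R : is_congruence R -> is_congruence (in_fst R).
  exact: congruence_preimage (homomorphism_rel_fst (cQ := cQ)).
have snd_cong R : is_congruence R -> is_congruence (in_snd R).
  exact: congruence_preimage (homomorphism_rel_snd (cQ := cQ)).
have inB : rmeet (in_fst a) (rcomp (in_fst b) (rcomp (rmeet (in_fst a) (in_snd G)) (in_fst b)))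
    (exist _ (x, x) (rQ x) : B) (exist _ (y, y) (rQ y)).
  by split=> //; exists (exist _ (u, w) Quw); split=> //; exists (exist _ (z, w') Qzw').
have := Hmod B (variety_rel_algebra cQ HV VA) _ _ _
  (fst_cong _ ca) (fst_cong _ cb) (snd_cong _ cG) _ _ inB.
apply: (rcompn_map (f := rel_fst (cQ := cQ))) => // p q [apq Gpq]; split=> //.
by exists (rel_snd p), (rel_snd q); split=> //; [exact: (proj2_sig p) | exact: (proj2_sig q)].
Qed.

Lemma Arel_sub T l (a b c : relation T) : rincl (Arel l a b c) a.
Proof. by case: l => [|l] x y []. Qed.

Section ArelStep.
Variables (S : signature) (V : algebra S -> Prop) (r : nat).
Hypotheses (HV : is_variety V) (Hmod : modular3 V (2 * r)).
Variables (A : algebra S) (a b c : relation A).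
Hypotheses (VA : V A) (ca : is_congruence a) (cb : is_congruence b) (cc : is_congruence c).

Local Notation ab := (rmeet a b).
Local Notation ac := (rmeet a c).

Let cab : is_congruence ab := rmeet_congruence ca cb.
Let cac : is_congruence ac := rmeet_congruence ca cc.

Lemma rpow_of_rconj (Q G : relation A) m x y u z :
  compatible Q -> (forall x, Q x x) -> is_congruence G ->
  rincl (rcomp ab (rconj Q G)) (rpow m (rcomp ab ac)) ->
  a x y -> b x u -> a u z -> rconj Q G u z -> b z y ->
  rpow (r * m) (rcomp ab ac) x y.
Proof.
move=> cQ rQ cG block axy bxu auz uz bzy.
have /rcompn_double xy := modular3_rconj HV Hmod VA ca cb cG cQ rQ
  (conj axy (ex_intro _ u (conj bxu (ex_intro _ z (conj (conj auz uz) bzy))))).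
apply: rpow_mul; apply: rpow_sub xy => p q [s [ps [_ sq]]].
by apply: block; exists s.
Qed.

Lemma Arel_step_even h x y u v : a x y -> b x u -> a u v -> b v y ->
  rpow (h.+1 + h.+1) (rcomp ac ab) u v -> rpow (r * (h.+1 + h.+1)) (rcomp ab ac) x y.
Proof.
case: (cab) (cac) (ca) (cb) => [rab sab tab kab] [rac sac _ kac] [_ _ ta _] [_ sb tb _].
move=> axy bxu auv bvy /rpow_add [w [uw wv]].
have [s [[z [vz zs]] sw]] := rpow_rcomp_sym sac sab wv.
have zw := rpow_rcomp_pad rab (ex_intro _ s (conj zs sw)).
apply: (rpow_of_rconj (Q := rpow h.+1 (rcomp ac ab)) (G := eq) (u := u) (z := z)) => //.
- exact/compatible_rpow/compatible_rcomp.
- by apply: rpow_refl => p; exists p.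
- exact: eq_congruence.
- exact: rconj_eq_rpow.
- exact: ta auv vz.1.
- by exists w, w.
- exact: tb (sb _ _ vz.2) bvy.
Qed.

Lemma Arel_step_odd h x y u v : a x y -> b x u -> a u v -> b v y ->
  rpow (h + h.+1) (rcomp ac ab) u v -> rpow (r * (h + h.+1)) (rcomp ab ac) x y.
Proof.
case: (cab) (cac) (ca) (cb) => [rab sab _ kab] [rac sac _ kac] [_ sa ta _] [_ _ tb _].
move=> axy bxu auv bvy /rpow_add [w [uw [s [[w' [ww' w's]] sv]]]].
have [t [w't tv]] := rpow_rcomp_shift (ex_intro _ s (conj w's sv)).
apply: (rpow_of_rconj (Q := rpow h (rcomp ac ab)) (G := ac) (u := u) (z := t)) => //.
- exact/compatible_rpow/compatible_rcomp.
- by apply: rpow_refl => p; exists p.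
- exact: rconj_rpow.
- exact: ta auv (sa _ _ tv.1).
- by exists w, w'; split=> //; apply: rpow_rcomp_sym w't.
- exact: tb tv.2 bvy.
Qed.

Lemma Arel_step m x y u v : 0 < m -> a x y -> b x u -> a u v -> b v y ->
  rpow m (rcomp ac ab) u v -> rpow (r * m) (rcomp ab ac) x y.
Proof.
rewrite -(odd_double_half m) -addnn; case: (odd m) (m./2) => [h|[|h]] // _.
- by rewrite add1n -addnS; apply: Arel_step_odd.
- by rewrite add0n; apply: Arel_step_even.
Qed.

End ArelStep.

Lemma Arel_rpow (S : signature) (V : algebra S -> Prop) (r : nat) :
  is_variety V -> 0 < r -> modular3 V (2 * r) ->
  forall l (A : algebra S), V A -> forall a b c : relation A,
  is_congruence a -> is_congruence b -> is_congruence c ->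
  rincl (Arel l a b c) (rpow (r ^ l) (rcomp (rmeet a b) (rmeet a c))).
Proof.
move=> HV r_gt0 Hmod; elim=> [|l IH] A VA a b c ca cb cc x y /=.
  case: ca cc => [ra _ _ _] [rc _ _ _] [axy bxy].
  by exists y; split=> //; exists y.
move=> [axy [u [bxu [v [uv bvy]]]]]; rewrite expnS.
apply: (Arel_step HV Hmod VA ca cb cc (u := u) (v := v)) => //.
- by rewrite expn_gt0 r_gt0.
- exact: Arel_sub uv.
- exact: IH uv.
Qed.

Theorem proposition7p1 (S : signature) (V : algebra S -> Prop) (r : nat) :
  is_variety V -> 1 <= r -> modular3 V (2 * r) ->
  forall l : nat, 1 <= l ->
  forall A : algebra S, V A ->
  forall a b c : relation A,
    is_congruence a -> is_congruence b -> is_congruence c ->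
    rincl (Arel l a b c) (rcompn (2 * r ^ l) (rmeet a b) (rmeet a c)).
Proof.
move=> HV r_gt0 Hmod l _ A VA a b c ca cb cc x y xy.
exact/rcompn_double/(Arel_rpow HV r_gt0 Hmod VA ca cb cc).
Qed.
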